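(* Let $X\sim\mathsf{Bernoulli}(p)$ (i.e. $\Pr(X=1)=p$) with $p\in[\frac12,1)$, and let $Y\in\{0,1\}$ be obtained from $X$ through the binary channel $P_{Y|X}=\mathsf{BIBO}(\alpha,\beta)$, i.e. $P_{Y|X}(\cdot|0)=(\bar\alpha,\alpha)$ and $P_{Y|X}(\cdot|1)=(\beta,\bar\beta)$, with $\alpha,\beta\in[0,\frac12)$ and $\bar\alpha\bar p>\beta p$. Let $q=\Pr(Y=1)=\alpha\bar p+\bar\beta p$ and for $\varepsilon$ define $$\zeta(\varepsilon)=\frac{\bar\alpha\bar p+\bar\beta p-\varepsilon}{\bar\beta p-\alpha\bar p},\qquad \tilde\zeta(\varepsilon)=\frac{\bar\alpha\bar p+\bar\beta p-\varepsilon}{\bar\alpha\bar p-\beta p}.$$ Then for every $\varepsilon\in[p,\bar\alpha\bar p+\bar\beta p]=[\mathsf{P}_{\mathsf{c}}(X),\mathsf{P}_{\mathsf{c}}(X|Y)]$, $$\mathcal{h}(\varepsilon)=\begin{cases}1-\zeta(\varepsilon)q, & \alpha\bar\alpha\bar p^2<\beta\bar\beta p^2,\\ 1-\tilde\zeta(\varepsilon)\bar q, & \alpha\bar\alpha\bar p^2\ge\beta\bar\beta p^2.\end{cases}$$ Furthermore, when $\alpha\bar\alpha\bar p^2<\beta\bar\beta p^2$ the Z-channel $P_{Z|Y}$ on $\{0,1\}$ given by $P_{Z|Y}(0|0)=1$, $P_{Z|Y}(0|1)=\zeta(\varepsilon)$, $P_{Z|Y}(1|1)=1-\zeta(\varepsilon)$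 achieves $\mathcal{h}(\varepsilon)$ (i.e. satisfies $\mathsf{P}_{\mathsf{c}}(X|Z)\le\varepsilon$ and $\mathsf{P}_{\mathsf{c}}(Y|Z)=\mathcal{h}(\varepsilon)$), and when $\alpha\bar\alpha\bar p^2\ge\beta\bar\beta p^2$ the reverse Z-channel $P_{Z|Y}(0|0)=1-\tilde\zeta(\varepsilon)$, $P_{Z|Y}(1|0)=\tilde\zeta(\varepsilon)$, $P_{Z|Y}(1|1)=1$ achieves $\mathcal{h}(\varepsilon)$.
   Context: For $a\in[0,1]$, $\bar a=1-a$. For discrete random variables, $\mathsf{P}_{\mathsf{c}}(X)=\max_x P_X(x)$ and $\mathsf{P}_{\mathsf{c}}(X|Z)=\sum_z\max_x P_{XZ}(x,z)$. The privacy-constrained guessing function is $\mathcal{h}(\varepsilon)=\sup\{\mathsf{P}_{\mathsf{c}}(Y|Z): P_{Z|Y},\ X - Y - Z,\ \mathsf{P}_{\mathsf{c}}(X|Z)\le\varepsilon\}$, the supremum being over all channels $P_{Z|Y}$ into finite alphabets with $X - Y - Z$ a Markov chain. *)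

From HB Require Import structures.
From mathcomp Require Import all_boot all_order all_algebra.
From mathcomp Require Import reals.
Set Implicit Arguments. Unset Strict Implicit. Unset Printing Implicit Defensive.
Import Order.TTheory GRing.Theory Num.Theory.
Local Open Scope ring_scope.

Section Defs.
Variable R : realType.

(* V : A -> B -> R is a channel (stochastic matrix) P_{B|A}. *)
Definition stochastic (A B : finType) (V : A -> B -> R) : Prop :=
  (forall a b, 0 <= V a b) /\ (forall a, \sum_(b : B) V a b = 1).

(* Correct-guess probability of the first component given the second,
   from a joint distribution P_{AB}:  P_c(A|B) = sum_b max_a P_{AB}(a,b). *)
Definition Pc_cond (A B : finType) (P : A -> B -> R) : R :=
  \sum_(b : B) \big[Num.max/0]_(a : A) P a b.

(* Joint laws induced by X - Y - Z with P_{Z|Y} = V. *)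
Definition PXZ (X Y Z : finType) (PXY : X -> Y -> R) (V : Y -> Z -> R) :=
  fun x z => \sum_(y : Y) PXY x y * V y z.
Definition PYZ (X Y Z : finType) (PXY : X -> Y -> R) (V : Y -> Z -> R) :=
  fun y z => (\sum_(x : X) PXY x y) * V y z.

Definition feasible_val (X Y : finType) (PXY : X -> Y -> R) (eps v : R) : Prop :=
  exists (Z : finType) (V : Y -> Z -> R),
    stochastic V /\ Pc_cond (PXZ PXY V) <= eps /\ Pc_cond (PYZ PXY V) = v.

Definition is_sup (S : R -> Prop) (v : R) : Prop :=
  (forall u, S u -> u <= v) /\ (forall w, (forall u, S u -> u <= w) -> v <= w).

Definition h_is (X Y : finType) (PXY : X -> Y -> R) (eps v : R) : Prop :=
  is_sup (feasible_val PXY eps) v.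

Definition bern (p : R) (x : bool) : R := if x then p else 1 - p.

Definition bibo (a b : R) (x y : bool) : R :=
  if x then (if y then 1 - b else b) else (if y then a else 1 - a).

Definition PXY_bibo (p a b : R) : bool -> bool -> R :=
  fun x y => bern p x * bibo a b x y.

Definition zchan (z : R) (y w : bool) : R :=
  if y then (if w then 1 - z else z) else (if w then 0 else 1).

Definition rzchan (z : R) (y w : bool) : R :=
  if y then (if w then 1 else 0) else (if w then z else 1 - z).

End Defs.

From HB Require Import structures.
From mathcomp Require Import all_boot all_order all_algebra.
From mathcomp Require Import reals.
From mathcomp Require Import lra.
Set Implicit Arguments. Unset Strict Implicit. Unset Printing Implicit Defensive.
Import Order.TTheory GRing.Theory Num.Theory.
Local Open Scope ring_scope.

(* Upper bound by duality.  For a channel P_{Z|Y}, an output letter z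
   contributes max_y P_{YZ}(y,z) to P_c(Y|Z) and max_x P_{XZ}(x,z) to P_c(X|Z),
   both functions of the column w = P_{Z|Y}(.|z) alone.  A letterwise bound
   max_y P_Y(y) w_y <= lam * max_x sum_y P_{XY}(x,y) w_y + <c, w> therefore sums to
   P_c(Y|Z) <= lam P_c(X|Z) + sum_y c_y <= lam eps + sum_y c_y.  For BIBO(alpha, beta)
   and lam = q / ((1-beta)p - alpha(1-p)) a suitable c exists when
   alpha(1-alpha)(1-p)^2 <= beta(1-beta)p^2, and the Z-channel whose zeta makes
   P_c(X|Z) = eps meets this bound on both output letters.  The other regime is
   the same statement after exchanging 0 and 1 in X, Y and Z, which turns
   (p, alpha, beta) into (1-p, beta, alpha) and the Z-channel into the reverse one. *)

Definition achieves (R : realType) (X Y Z : finType) (P : X -> Y -> R)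
    (eps : R) (V : Y -> Z -> R) (v : R) : Prop :=
  stochastic V /\ Pc_cond (PXZ P V) <= eps /\ Pc_cond (PYZ P V) = v.

Section Guessing.
Variable R : realType.

Lemma h_is_achieved (X Y Z : finType) (P : X -> Y -> R) (V : Y -> Z -> R) eps v :
  achieves P eps V v -> (forall u, feasible_val P eps u -> u <= v) -> h_is P eps v.
Proof. by move=> PV ub; split=> // w; apply; exists Z, V. Qed.

Lemma Pc_cond_PYZ_le_affine (X Y Z : finType) (P : X -> Y -> R) (V : Y -> Z -> R)
    (lam : R) (c : Y -> R) :
  stochastic V ->
  (forall w : Y -> R, (forall y, 0 <= w y) ->
     \big[Num.max/0]_y ((\sum_x P x y) * w y) <=
     lam * \big[Num.max/0]_x (\sum_y P x y * w y) + \sum_y c y * w y) ->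
  Pc_cond (PYZ P V) <= lam * Pc_cond (PXZ P V) + \sum_y c y.
Proof.
move=> [V_ge0 V_sum1] letterwise.
have -> : \sum_y c y = \sum_z \sum_y c y * V y z.
  rewrite exchange_big; apply: eq_bigr => y _.
  by rewrite -mulr_sumr V_sum1 mulr1.
rewrite /Pc_cond mulr_sumr -big_split /=; apply: ler_sum => z _.
exact: letterwise.
Qed.

Lemma Pc_cond_relabel (A B : finType) (f : A -> A) (g : B -> B) (F : A -> B -> R) :
  injective f -> injective g -> Pc_cond (fun a b => F (f a) (g b)) = Pc_cond F.
Proof.
move=> f_inj g_inj; rewrite /Pc_cond [RHS](reindex_inj g_inj).
by apply: eq_bigr => b _; rewrite [RHS](reindex_inj f_inj).
Qed.

Section Relabel.
Variables (X Y Z : finType) (f : X -> X) (g : Y -> Y) (k : Z -> Z).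
Hypotheses (f_inj : injective f) (g_inj : injective g) (k_inj : injective k).
Variables (P P' : X -> Y -> R) (V W : Y -> Z -> R).
Hypothesis P'E : forall x y, P' x y = P (f x) (g y).
Hypothesis WE : forall y z, W y z = V (g y) (k z).

Lemma Pc_cond_PXZ_relabel : Pc_cond (PXZ P' W) = Pc_cond (PXZ P V).
Proof.
rewrite -(Pc_cond_relabel (PXZ P V) f_inj k_inj); apply: eq_bigr => z _.
apply: eq_bigr => x _; rewrite /PXZ [RHS](reindex_inj g_inj).
by apply: eq_bigr => y _; rewrite P'E WE.
Qed.

Lemma Pc_cond_PYZ_relabel : Pc_cond (PYZ P' W) = Pc_cond (PYZ P V).
Proof.
rewrite -(Pc_cond_relabel (PYZ P V) g_inj k_inj); apply: eq_bigr => z _.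
apply: eq_bigr => y _; rewrite /PYZ WE [in RHS](reindex_inj f_inj).
by congr (_ * _); apply: eq_bigr => x _; rewrite P'E.
Qed.

Lemma stochastic_relabel : stochastic V -> stochastic W.
Proof.
move=> [V_ge0 V_sum1]; split=> [y z|y]; first by rewrite WE.
by rewrite -(V_sum1 (g y)) [RHS](reindex_inj k_inj); apply: eq_bigr => z _; rewrite WE.
Qed.

Lemma achieves_relabel eps v : achieves P eps V v -> achieves P' eps W v.
Proof.
move=> [sV [PXZ_le PYZ_v]].
rewrite /achieves Pc_cond_PXZ_relabel Pc_cond_PYZ_relabel.
by split=> //; apply: stochastic_relabel.
Qed.

End Relabel.

Lemma feasible_val_relabel (X Y : finType) (f : X -> X) (g : Y -> Y)
    (P P' : X -> Y -> R) eps v :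
  injective f -> injective g -> (forall x y, P' x y = P (f x) (g y)) ->
  feasible_val P eps v -> feasible_val P' eps v.
Proof.
move=> f_inj g_inj P'E [Z [V PV]]; exists Z, (fun y z => V (g y) z).
exact: (achieves_relabel f_inj g_inj (@inj_id Z) P'E).
Qed.

Lemma h_is_relabel (X Y : finType) (f : X -> X) (g : Y -> Y) (P P' : X -> Y -> R) eps v :
  involutive f -> involutive g -> (forall x y, P' x y = P (f x) (g y)) ->
  h_is P eps v -> h_is P' eps v.
Proof.
move=> fK gK P'E [ub least]; have [f_inj g_inj] := (inv_inj fK, inv_inj gK).
have PE x y : P x y = P' (f x) (g y) by rewrite P'E !(fK, gK).
split=> [u /(feasible_val_relabel f_inj g_inj PE)|w w_ub]; first exact: ub.
by apply: least => u /(feasible_val_relabel f_inj g_inj P'E); apply: w_ub.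
Qed.

Lemma bigmax_bool (F : bool -> R) :
  \big[Num.max/0]_b F b = Num.max (F true) (Num.max (F false) 0).
Proof. by rewrite /index_enum !unlock. Qed.

Lemma Pc_cond_bool (F : bool -> bool -> R) : (forall x w, 0 <= F x w) ->
  Pc_cond F = Num.max (F true true) (F false true) + Num.max (F true false) (F false false).
Proof. by move=> F_ge0; rewrite /Pc_cond big_bool !bigmax_bool !(@max_l _ _ (F false _)). Qed.

Lemma PXZ_ge0 (X Y Z : finType) (P : X -> Y -> R) (V : Y -> Z -> R) x z :
  (forall x y, 0 <= P x y) -> stochastic V -> 0 <= PXZ P V x z.
Proof. by move=> P_ge0 [V_ge0 _]; apply: sumr_ge0 => y _; apply: mulr_ge0. Qed.

Lemma PYZ_ge0 (X Y Z : finType) (P : X -> Y -> R) (V : Y -> Z -> R) y z :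
  (forall x y, 0 <= P x y) -> stochastic V -> 0 <= PYZ P V y z.
Proof. by move=> P_ge0 [V_ge0 _]; apply: mulr_ge0 => //; apply: sumr_ge0. Qed.

Lemma stochastic_zchan (z : R) : 0 <= z <= 1 -> stochastic (zchan z).
Proof.
move=> /andP[z_ge0 z_le1]; split=> [[] []|[]] /=; rewrite ?big_bool /=; lra.
Qed.

End Guessing.

Section BinaryChannel.
Variables (R : realType) (p a b : R).
Hypotheses (p_ge0 : 0 <= p) (p_le1 : p <= 1).
Hypotheses (a_ge0 : 0 <= a) (a_le1 : a <= 1) (b_ge0 : 0 <= b) (b_le1 : b <= 1).

Local Notation PXY := (PXY_bibo p a b).
Local Notation q := (a * (1 - p) + (1 - b) * p).
Local Notation PcXY := ((1 - a) * (1 - p) + (1 - b) * p).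
Local Notation D := ((1 - b) * p - a * (1 - p)).
Local Notation E := ((1 - a) * (1 - p) - b * p).

Hypothesis D_gt0 : 0 < D.

(* [lra] ignores section hypotheses, so they are passed through the goal. *)
Local Ltac lra_bibo := move: p_ge0 p_le1 a_ge0 a_le1 b_ge0 b_le1 D_gt0; lra.

Lemma PXY_bibo_ge0 x y : 0 <= PXY x y.
Proof. by rewrite /PXY_bibo /bern /bibo; case: x; case: y; apply: mulr_ge0; lra_bibo. Qed.

Lemma q_ge0 : 0 <= q.
Proof. by apply: addr_ge0; apply: mulr_ge0; lra_bibo. Qed.

Lemma q_le1 : q <= 1.
Proof.
have : 0 <= (1 - a) * (1 - p) + b * p by apply: addr_ge0; apply: mulr_ge0; lra_bibo.
by lra.
Qed.

Lemma Pc_cond_PXZ_zchan z : 0 <= z <= 1 -> z * D <= E ->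
  Pc_cond (PXZ PXY (zchan z)) = PcXY - z * D.
Proof.
move=> z01 zD_le; have [z_ge0 z_le1] := andP z01.
rewrite Pc_cond_bool => [|x w]; last exact: PXZ_ge0 PXY_bibo_ge0 (stochastic_zchan z01).
have Dz_ge0 : 0 <= D * (1 - z) by apply: mulr_ge0; [exact: ltW | rewrite subr_ge0].
by rewrite /PXZ /= !big_bool /PXY_bibo /bern /bibo /zchan /= max_l ?max_r; lra_bibo.
Qed.

Lemma Pc_cond_PYZ_zchan z : 0 <= z <= 1 -> z * q <= 1 - q ->
  Pc_cond (PYZ PXY (zchan z)) = 1 - z * q.
Proof.
move=> z01 zq_le; have [z_ge0 z_le1] := andP z01.
rewrite Pc_cond_bool => [|y w]; last exact: PYZ_ge0 PXY_bibo_ge0 (stochastic_zchan z01).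
have qz_ge0 : 0 <= q * (1 - z) by apply: mulr_ge0; [exact: q_ge0 | rewrite subr_ge0].
by rewrite /PYZ /= !big_bool /PXY_bibo /bern /bibo /zchan /= max_l ?max_r; lra_bibo.
Qed.

Hypothesis regime : a * (1 - a) * (1 - p) ^+ 2 <= b * (1 - b) * p ^+ 2.

Lemma regime_cross : q * E <= (1 - q) * D.
Proof. by move: regime; rewrite !expr2; lra. Qed.

Lemma Pc_cond_PYZ_bibo_le (Z : finType) (V : bool -> Z -> R) : stochastic V ->
  Pc_cond (PYZ PXY V) <= q / D * Pc_cond (PXZ PXY V) + (1 - q - q / D * (1 - p)).
Proof.
move=> sV; set lam := q / D.
have lamD : lam * D = q by rewrite divfK ?gt_eqF.
have lam_ge0 : 0 <= lam by rewrite divr_ge0 ?q_ge0 ?ltW.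
have slack : 0 <= 1 - q - lam * E.
  have lamED : lam * E * D = q * E by rewrite mulrAC lamD.
  by rewrite -(pmulr_lge0 _ D_gt0) mulrBl lamED subr_ge0 regime_cross.
(* Dual certificate: with this [lam] and [c] the bound is tight on both
   output letters of [zchan z]. *)
pose c y := if y then - (lam * ((1 - p) * a)) else 1 - q - lam * ((1 - p) * (1 - a)).
apply: le_trans (Pc_cond_PYZ_le_affine (lam := lam) (c := c) sV _) _; last first.
  by rewrite big_bool /c /=; lra.
move=> w w_ge0; set M := \big[Num.max/0]_x _.
have M_ge x : lam * (\sum_y PXY x y * w y) <= lam * M.
  by apply: ler_wpM2l => //; rewrite /M bigmax_bool; case: x; rewrite !le_max lexx ?orbT.
have := M_ge true; have := M_ge false.
rewrite bigmax_bool !ge_max !big_bool /PXY_bibo /bern /bibo /c /= => M_false M_true.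
have slack_w := mulr_ge0 slack (w_ge0 false).
have lamD_w : lam * D * w true = q * w true by rewrite lamD.
have q'_w : 0 <= (1 - q) * w false by rewrite mulr_ge0 ?subr_ge0 ?q_le1.
by apply/and3P; split; lra.
Qed.

Lemma zchan_optimal e : p <= e -> 1 - p <= e -> e <= PcXY ->
  let zeta := (PcXY - e) / D in
  h_is PXY e (1 - zeta * q) /\ achieves PXY e (zchan zeta) (1 - zeta * q).
Proof.
move=> p_le_e p'_le_e e_le zeta.
have zetaD : zeta * D = PcXY - e by rewrite divfK ?gt_eqF.
have zeta01 : 0 <= zeta <= 1.
  by apply/andP; split; [apply: divr_ge0 | rewrite ler_pdivrMr // mul1r]; lra.
have zetaD_le : zeta * D <= E by rewrite zetaD; lra.
have zetaq_le : zeta * q <= 1 - q.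
  rewrite -(ler_pM2r D_gt0) mulrAC; apply: le_trans regime_cross.
  by rewrite mulrC ler_wpM2l ?q_ge0.
have attained : achieves PXY e (zchan zeta) (1 - zeta * q).
  split; first exact: stochastic_zchan.
  by rewrite Pc_cond_PXZ_zchan // zetaD Pc_cond_PYZ_zchan //; split; lra.
split=> //; apply: h_is_achieved attained _ => _ [Z [V [sV [PXZ_le <-]]]].
apply: le_trans (Pc_cond_PYZ_bibo_le sV) _; set lam := q / D.
have lam_ge0 : 0 <= lam by apply: divr_ge0; [exact: q_ge0 | exact: ltW].
have lamD : lam * D = q by rewrite divfK ?gt_eqF.
have zetaq : zeta * q = lam * (PcXY - e) by rewrite mulrC mulrA [RHS]mulrAC.
by have := ler_wpM2l lam_ge0 PXZ_le; lra.
Qed.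

End BinaryChannel.

Lemma rzchan_optimal (R : realType) (p a b e : R) :
  0 <= p -> p <= 1 -> 0 <= a -> a <= 1 -> 0 <= b -> b <= 1 ->
  0 < (1 - a) * (1 - p) - b * p ->
  b * (1 - b) * p ^+ 2 <= a * (1 - a) * (1 - p) ^+ 2 ->
  p <= e -> 1 - p <= e -> e <= (1 - a) * (1 - p) + (1 - b) * p ->
  let q := a * (1 - p) + (1 - b) * p in
  let zeta := ((1 - a) * (1 - p) + (1 - b) * p - e) / ((1 - a) * (1 - p) - b * p) in
  h_is (PXY_bibo p a b) e (1 - zeta * (1 - q)) /\
  achieves (PXY_bibo p a b) e (rzchan zeta) (1 - zeta * (1 - q)).
Proof.
move=> p_ge0 p_le1 a_ge0 a_le1 b_ge0 b_le1 D_gt0 regime p_le_e p'_le_e e_le q zeta.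
have [p'_ge0 p'_le1] : 0 <= 1 - p /\ 1 - p <= 1 by split; lra.
have := @zchan_optimal R (1 - p) b a p'_ge0 p'_le1 b_ge0 b_le1 a_ge0 a_le1.
rewrite subKr [(1 - b) * p + _]addrC => /(_ D_gt0 regime e p'_le_e p_le_e e_le).
have -> : b * p + (1 - a) * (1 - p) = 1 - q by rewrite /q; lra.
have P'E x y : PXY_bibo p a b x y = PXY_bibo (1 - p) b a (~~ x) (~~ y).
  by case: x; case: y; rewrite /PXY_bibo /bern /bibo /= ?subKr.
have WE y w : rzchan zeta y w = zchan zeta (~~ y) (~~ w) by case: y; case: w.
case=> h_is' attained'; split.
- exact: h_is_relabel negbK negbK P'E h_is'.
- exact: (achieves_relabel negb_inj negb_inj negb_inj P'E WE attained').
Qed.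

Theorem theorem2 (R : realType) (p alpha beta eps : R) :
  2^-1 <= p -> p < 1 ->
  0 <= alpha -> alpha < 2^-1 -> 0 <= beta -> beta < 2^-1 ->
  beta * p < (1 - alpha) * (1 - p) ->
  p <= eps -> eps <= (1 - alpha) * (1 - p) + (1 - beta) * p ->
  let q := alpha * (1 - p) + (1 - beta) * p in
  let zeta := ((1 - alpha) * (1 - p) + (1 - beta) * p - eps)
                / ((1 - beta) * p - alpha * (1 - p)) in
  let zeta' := ((1 - alpha) * (1 - p) + (1 - beta) * p - eps)
                / ((1 - alpha) * (1 - p) - beta * p) in
  let PXY := PXY_bibo p alpha beta in
  (alpha * (1 - alpha) * (1 - p) ^+ 2 < beta * (1 - beta) * p ^+ 2 ->
     h_is PXY eps (1 - zeta * q) /\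
     stochastic (zchan zeta) /\
     Pc_cond (PXZ PXY (zchan zeta)) <= eps /\
     Pc_cond (PYZ PXY (zchan zeta)) = 1 - zeta * q) /\
  (beta * (1 - beta) * p ^+ 2 <= alpha * (1 - alpha) * (1 - p) ^+ 2 ->
     h_is PXY eps (1 - zeta' * (1 - q)) /\
     stochastic (rzchan zeta') /\
     Pc_cond (PXZ PXY (rzchan zeta')) <= eps /\
     Pc_cond (PYZ PXY (rzchan zeta')) = 1 - zeta' * (1 - q)).
Proof.
move=> p_half p_lt1 a_ge0 a_lt_half b_ge0 b_lt_half E_gt0 p_le_e e_le q zeta zeta' PXY.
have p'_le_e : 1 - p <= eps by lra.
split=> regime.
- have D_gt0 : 0 < (1 - beta) * p - alpha * (1 - p).
    have : 0 < (2^-1 - beta) * p by apply: mulr_gt0; lra.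
    have : 0 <= (2^-1 - alpha) * (1 - p) by apply: mulr_ge0; lra.
    lra.
  by apply: zchan_optimal => //; lra.
- by apply: rzchan_optimal => //; lra.
Qed.
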